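(* For $\alpha,\beta\in\mathbb{C}$ with $|\alpha|\ne|\beta|$ and $r_1,r_2\in\mathbb{R}$, let $X_{\alpha,\beta}=\Re\int\Phi:\mathbb{C}-\{0\}\to\mathbb{R}^3$ with $\Phi_1=\big(\frac1{z^2}+\frac{r_1}{z}+\frac{\alpha+\overline\beta}{2}\big)dz$, $\Phi_2=\big(\frac{\imath}{z^2}+\frac{r_2}{z}+\frac{\alpha-\overline\beta}{2\imath}\big)dz$, $\Phi_3=\frac{dz}{z}$. Then $X_{\alpha,\beta}$ is a well-defined harmonic map, and it is an immersion if and only if $(\alpha,\beta)\in\Omega:=\mathbb{C}^2-\big(\{(u,v):|u|\le|v|\}\cup\{(u,v):\Re(u)\ge0,\ |\Im(u)|\le|v|\}\big)$. *)

From Stdlib Require Import Reals.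
From Coquelicot Require Import Coquelicot.
Open Scope R_scope.

(* The Weierstrass-type data Phi_j = phi_j(z) dz, j = 0,1,2 (paper's Phi_1, Phi_2, Phi_3). *)
Definition Phi (r1 r2 : R) (alpha beta : C) (j : nat) (z : C) : C :=
  match j with
  | 0%nat => (/ (z * z) + RtoC r1 / z + (alpha + Cconj beta) / RtoC 2)%C
  | 1%nat => (Ci / (z * z) + RtoC r2 / z + (alpha - Cconj beta) / (RtoC 2 * Ci))%C
  | _ => (/ z)%C
  end.

(* X = (X_0, X_1, X_2) : C - {0} -> R^3 is "Re \int Phi", i.e. dX_j = Re (Phi_j),
   which for X_j as a function of (x,y) means
   dX_j/dx = Re phi_j(z),  dX_j/dy = Re (i phi_j(z)) = - Im phi_j(z), for all z <> 0. *)
Definition is_Re_primitive (r1 r2 : R) (alpha beta : C) (X : nat -> R -> R -> R) : Prop :=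
  forall j : nat, (j < 3)%nat ->
  forall x y : R, (x, y) <> (0, 0) ->
    is_derive (fun t => X j t y) x (Re (Phi r1 r2 alpha beta j (x, y))) /\
    is_derive (fun t => X j x t) y (- Im (Phi r1 r2 alpha beta j (x, y))).

Definition dx (f : R -> R -> R) (x y : R) : R := Derive (fun t => f t y) x.
Definition dy (f : R -> R -> R) (x y : R) : R := Derive (fun t => f x t) y.

Definition harmonic_on (U : R -> R -> Prop) (f : R -> R -> R) : Prop :=
  forall x y : R, U x y ->
    ex_derive (fun t => f t y) x /\ ex_derive (fun t => f x t) y /\
    ex_derive (fun t => dx f t y) x /\ ex_derive (fun t => dx f x t) y /\
    ex_derive (fun t => dy f t y) x /\ ex_derive (fun t => dy f x t) y /\
    continuous (fun p : R * R => dx (dx f) (fst p) (snd p)) (x, y) /\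
    continuous (fun p : R * R => dy (dx f) (fst p) (snd p)) (x, y) /\
    continuous (fun p : R * R => dx (dy f) (fst p) (snd p)) (x, y) /\
    continuous (fun p : R * R => dy (dy f) (fst p) (snd p)) (x, y) /\
    dx (dx f) x y + dy (dy f) x y = 0.

Definition punctured_plane (x y : R) : Prop := (x, y) <> (0, 0).

Definition immersion_on (U : R -> R -> Prop) (X : nat -> R -> R -> R) : Prop :=
  forall x y : R, U x y ->
    forall a b : R,
      (forall j : nat, (j < 3)%nat -> a * dx (X j) x y + b * dy (X j) x y = 0) ->
      a = 0 /\ b = 0.

Definition Omega (u v : C) : Prop :=
  ~ (Cmod u <= Cmod v) /\ ~ (0 <= Re u /\ Rabs (Im u) <= Cmod v).

(* Write z = x + i y and Phi_j = phi_j dz.  The 1/z^2 terms are exact and the residues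
   r1, r2, 1 at 0 are real, so Re (int Phi) is single valued, with an explicit primitive
   built from -1/z and ln |z|.  Since each phi_j is holomorphic, the partial derivatives
   (Re phi_j, -Im phi_j) of X_j satisfy the Cauchy-Riemann equations, hence X_j is
   harmonic.  The differential of X at z maps w to (Re (phi_j(z) w))_j; the third
   component forces w in i R z, and then the first two vanish iff
   (alpha - s) z = beta conj(z) with s = 2 / |z|^2.  Such a z <> 0 exists iff
   |alpha - s| = |beta|, so X fails to be an immersion iff this equation has a root
   s > 0, which by elementary plane geometry happens exactly off Omega. *)

From Stdlib Require Import Reals Lra Lia Psatz.
From Coquelicot Require Import Coquelicot.
Open Scope R_scope.

Lemma punctured_sq_norm_pos (x y : R) : (x, y) <> (0, 0) -> 0 < x * x + y * y.
Proof.
  intros H. destruct (Req_dec x 0) as [-> | Hx].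
  - destruct (Req_dec y 0) as [-> | Hy]; [congruence | nra].
  - nra.
Qed.

Ltac continuity_step := match goal with
  | |- continuous (fun q => fst q) _ => apply continuous_fst
  | |- continuous (fun q => snd q) _ => apply continuous_snd
  | |- continuous (fun q => Rplus (@?f q) (@?g q)) _ => apply (continuous_plus f g)
  | |- continuous (fun q => Rminus (@?f q) (@?g q)) _ => apply (continuous_minus f g)
  | |- continuous (fun q => Rmult (@?f q) (@?g q)) _ => apply (continuous_mult f g)
  | |- continuous (fun q => Ropp (@?f q)) _ => apply (continuous_opp f)
  | |- continuous (fun q => Rinv (@?f q)) _ =>
      apply (continuous_comp f Rinv); [| apply continuous_Rinv]
  | |- continuous (fun q => _) _ => apply continuous_const
  end.

Lemma punctured_plane_open (x y : R) : punctured_plane x y ->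
  locally ((x, y) : R * R) (fun z => punctured_plane (fst z) (snd z)).
Proof.
  intros H. pose proof (punctured_sq_norm_pos x y H) as Hpos.
  set (N := fun z : R * R => fst z * fst z + snd z * snd z).
  assert (HN : continuous N (x, y)) by (unfold N; repeat continuity_step).
  assert (Hgt : locally (N (x, y)) (fun t => 0 < t)).
  { apply open_gt. exact Hpos. }
  assert (Hnear : locally ((x, y) : R * R) (fun z => 0 < N z)) by exact (HN _ Hgt).
  revert Hnear. apply filter_imp.
  intros [a b] Hab E. unfold N in Hab. simpl in Hab, E. injection E as -> ->. lra.
Qed.

Lemma locally_slice_fst (P : R * R -> Prop) (x y : R) :
  locally ((x, y) : R * R) P -> locally x (fun t => P (t, y)).
Proof. intros [e He]. exists e. intros t Ht. apply He. split; [exact Ht | apply ball_center]. Qed.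

Lemma locally_slice_snd (P : R * R -> Prop) (x y : R) :
  locally ((x, y) : R * R) P -> locally y (fun t => P (x, t)).
Proof. intros [e He]. exists e. intros t Ht. apply He. split; [apply ball_center | exact Ht]. Qed.

Section HarmonicCriterion.

Variables (U : R -> R -> Prop) (f p q p_x p_y q_x q_y : R -> R -> R).

Hypothesis U_open : forall x y, U x y -> locally ((x, y) : R * R) (fun z => U (fst z) (snd z)).
Hypothesis f_derive : forall x y, U x y ->
  is_derive (fun t => f t y) x (p x y) /\ is_derive (fun t => f x t) y (q x y).
Hypothesis p_derive : forall x y, U x y ->
  is_derive (fun t => p t y) x (p_x x y) /\ is_derive (fun t => p x t) y (p_y x y).
Hypothesis q_derive : forall x y, U x y ->
  is_derive (fun t => q t y) x (q_x x y) /\ is_derive (fun t => q x t) y (q_y x y).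
Hypothesis second_partials_continuous : forall x y, U x y ->
  continuous (fun z => p_x (fst z) (snd z)) (x, y) /\
  continuous (fun z => p_y (fst z) (snd z)) (x, y) /\
  continuous (fun z => q_x (fst z) (snd z)) (x, y) /\
  continuous (fun z => q_y (fst z) (snd z)) (x, y).
Hypothesis laplacian_zero : forall x y, U x y -> p_x x y + q_y x y = 0.

Lemma dx_on (x y : R) : U x y -> dx f x y = p x y.
Proof. intros H. apply is_derive_unique, (f_derive x y H). Qed.

Lemma dy_on (x y : R) : U x y -> dy f x y = q x y.
Proof. intros H. apply is_derive_unique, (f_derive x y H). Qed.

Lemma derive_dx_on (x y : R) : U x y ->
  is_derive (fun t => dx f t y) x (p_x x y) /\ is_derive (fun t => dx f x t) y (p_y x y).
Proof.
  intros H. destruct (p_derive x y H) as [Hx Hy]. split.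
  - apply (is_derive_ext_loc (fun t => p t y)); [| exact Hx].
    apply (filter_imp (fun t => U t y)); [intros t Ht; symmetry; exact (dx_on t y Ht) |].
    exact (locally_slice_fst _ x y (U_open x y H)).
  - apply (is_derive_ext_loc (fun t => p x t)); [| exact Hy].
    apply (filter_imp (fun t => U x t)); [intros t Ht; symmetry; exact (dx_on x t Ht) |].
    exact (locally_slice_snd _ x y (U_open x y H)).
Qed.

Lemma derive_dy_on (x y : R) : U x y ->
  is_derive (fun t => dy f t y) x (q_x x y) /\ is_derive (fun t => dy f x t) y (q_y x y).
Proof.
  intros H. destruct (q_derive x y H) as [Hx Hy]. split.
  - apply (is_derive_ext_loc (fun t => q t y)); [| exact Hx].
    apply (filter_imp (fun t => U t y)); [intros t Ht; symmetry; exact (dy_on t y Ht) |].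
    exact (locally_slice_fst _ x y (U_open x y H)).
  - apply (is_derive_ext_loc (fun t => q x t)); [| exact Hy].
    apply (filter_imp (fun t => U x t)); [intros t Ht; symmetry; exact (dy_on x t Ht) |].
    exact (locally_slice_snd _ x y (U_open x y H)).
Qed.

Lemma continuous_ext_on (g h : R -> R -> R) (x y : R) : U x y ->
  (forall a b, U a b -> g a b = h a b) ->
  continuous (fun z => h (fst z) (snd z)) (x, y) ->
  continuous (fun z => g (fst z) (snd z)) (x, y).
Proof.
  intros H Egh. apply continuous_ext_loc.
  apply (filter_imp (fun z => U (fst z) (snd z))); [| exact (U_open x y H)].
  intros z Hz. symmetry. exact (Egh _ _ Hz).
Qed.

Lemma harmonic_on_of_partials : harmonic_on U f.
Proof.
  intros x y H.
  destruct (f_derive x y H) as [Fx Fy].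
  destruct (derive_dx_on x y H) as [Pxx Pxy].
  destruct (derive_dy_on x y H) as [Qyx Qyy].
  destruct (second_partials_continuous x y H) as [Cpx [Cpy [Cqx Cqy]]].
  repeat split; try (eexists; eassumption).
  - apply (continuous_ext_on _ p_x x y H); [| exact Cpx].
    intros a b Hab. exact (is_derive_unique _ _ _ (proj1 (derive_dx_on a b Hab))).
  - apply (continuous_ext_on _ p_y x y H); [| exact Cpy].
    intros a b Hab. exact (is_derive_unique _ _ _ (proj2 (derive_dx_on a b Hab))).
  - apply (continuous_ext_on _ q_x x y H); [| exact Cqx].
    intros a b Hab. exact (is_derive_unique _ _ _ (proj1 (derive_dy_on a b Hab))).
  - apply (continuous_ext_on _ q_y x y H); [| exact Cqy].
    intros a b Hab. exact (is_derive_unique _ _ _ (proj2 (derive_dy_on a b Hab))).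
  - assert (Exx : dx (dx f) x y = p_x x y) by exact (is_derive_unique _ _ _ Pxx).
    assert (Eyy : dy (dy f) x y = q_y x y) by exact (is_derive_unique _ _ _ Qyy).
    rewrite Exx, Eyy. exact (laplacian_zero x y H).
Qed.

End HarmonicCriterion.

Lemma det2_zero_kernel (m11 m12 m21 m22 : R) : m11 * m22 - m12 * m21 = 0 ->
  exists v1 v2, (v1, v2) <> (0, 0) /\ m11 * v1 + m12 * v2 = 0 /\ m21 * v1 + m22 * v2 = 0.
Proof.
  intros Hdet.
  destruct (Req_dec m11 0) as [H11 | H11]; [destruct (Req_dec m12 0) as [H12 | H12] |].
  - destruct (Req_dec m21 0) as [H21 | H21]; [destruct (Req_dec m22 0) as [H22 | H22] |];
      [exists 1, 0 | exists m22, (- m21) ..];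
      (split; [intros E; injection E; lra | subst; split; ring]).
  - exists m12, (- m11). split; [intros E; injection E; lra | split; nra].
  - exists m12, (- m11). split; [intros E; injection E; lra | split; nra].
Qed.

Lemma conj_linear_kernel (p q : C) :
  (exists z : C, z <> 0 /\ (p * z = q * Cconj z)%C) <-> Cmod p = Cmod q.
Proof.
  split.
  - intros [z [Hz E]]. apply Cmod_gt_0 in Hz.
    apply (f_equal Cmod) in E. rewrite !Cmod_mult, Cmod_conj in E.
    apply (Rmult_eq_reg_r (Cmod z)); [exact E | lra].
  - intros Hmod.
    assert (Hsq : Re p ^ 2 + Im p ^ 2 = Re q ^ 2 + Im q ^ 2)
      by (rewrite <- !Cmod2_alt, Hmod; reflexivity).
    destruct p as [p1 p2], q as [q1 q2]. unfold Re, Im in Hsq; simpl in Hsq.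
    destruct (det2_zero_kernel (p1 - q1) (- (p2 + q2)) (p2 - q2) (p1 + q1))
      as [v1 [v2 [Hv [E1 E2]]]]; [nra |].
    exists (v1, v2). split; [intros E; apply Hv; exact E |].
    unfold Cmult, Cconj; simpl. f_equal; lra.
Qed.

Lemma conj_linear_scale (p q z : C) (t : R) :
  (p * z = q * Cconj z)%C -> (p * (RtoC t * z) = q * Cconj (RtoC t * z))%C.
Proof.
  destruct p as [p1 p2], q as [q1 q2], z as [x y]. unfold Cmult, Cconj, RtoC; simpl.
  intros E. injection E as E1 E2. f_equal.
  - transitivity (t * (p1 * x - p2 * y)); [ring | rewrite E1; ring].
  - transitivity (t * (p1 * y + p2 * x)); [ring | rewrite E2; ring].
Qed.

Lemma Cmod_eq_iff_sq (u v : C) : Cmod u = Cmod v <-> Cmod u ^ 2 = Cmod v ^ 2.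
Proof.
  pose proof (Cmod_ge_0 u). pose proof (Cmod_ge_0 v).
  split; intros E; [rewrite E; reflexivity | nra].
Qed.

Lemma Cmod_shift_sq (u : C) (s : R) : Cmod (u - RtoC s) ^ 2 = (Re u - s) ^ 2 + Im u ^ 2.
Proof. rewrite Cmod2_alt. destruct u as [u1 u2]. unfold Re, Im; simpl. ring. Qed.

(* The circle of radius |v| around u meets the positive real axis exactly when u lies
   in the disc of radius |v| or in the half strip {Re u >= 0, |Im u| <= |v|}; the
   hypothesis discards the circles through the origin. *)
Lemma Omega_iff_no_positive_root (u v : C) : Cmod u <> Cmod v ->
  (Omega u v <-> ~ exists s, 0 < s /\ Cmod (u - RtoC s) = Cmod v).
Proof.
  intros Hne. unfold Omega.
  pose proof (Cmod2_alt u) as Hu. pose proof (Cmod_ge_0 u). pose proof (Cmod_ge_0 v).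
  pose proof (Rabs_pos (Im u)). pose proof (pow2_abs (Im u)).
  assert (Hroot : forall s, Cmod (u - RtoC s) = Cmod v <-> (Re u - s) ^ 2 + Im u ^ 2 = Cmod v ^ 2)
    by (intros s; rewrite Cmod_eq_iff_sq, Cmod_shift_sq; reflexivity).
  split.
  - intros [Hfar Hstrip] [s [Hs Hs_root]]. apply Hroot in Hs_root.
    apply Rnot_le_lt in Hfar. apply Hstrip. split.
    + destruct (Rle_or_lt 0 (Re u)) as [| Hneg]; [assumption |]. exfalso. nra.
    + pose proof (pow2_ge_0 (Re u - s)).
      assert (Rabs (Im u) ^ 2 <= Cmod v ^ 2) by lra.
      destruct (Rle_or_lt (Rabs (Im u)) (Cmod v)); [assumption | clear Hstrip; nra].
  - intros Hno.
    assert (Hroot_from : 0 <= Cmod v ^ 2 - Im u ^ 2 ->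
                         0 < Re u + sqrt (Cmod v ^ 2 - Im u ^ 2) -> False).
    { intros Hd Hpos. pose proof (sqrt_sqrt _ Hd). apply Hno.
      exists (Re u + sqrt (Cmod v ^ 2 - Im u ^ 2)). split; [exact Hpos |].
      apply Hroot. nra. }
    split.
    + intros Hle. assert (Cmod u < Cmod v) by lra.
      assert (Hd : 0 <= Cmod v ^ 2 - Im u ^ 2) by nra.
      pose proof (sqrt_sqrt _ Hd). pose proof (sqrt_pos (Cmod v ^ 2 - Im u ^ 2)).
      apply (Hroot_from Hd). nra.
    + intros [Hre Him].
      assert (Hd : 0 <= Cmod v ^ 2 - Im u ^ 2) by nra.
      pose proof (sqrt_sqrt _ Hd). pose proof (sqrt_pos (Cmod v ^ 2 - Im u ^ 2)).
      apply (Hroot_from Hd).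
      destruct (Rle_lt_or_eq_dec 0 (Re u + sqrt (Cmod v ^ 2 - Im u ^ 2))) as [| E]; [lra | assumption |].
      exfalso. apply Hne. apply Cmod_eq_iff_sq. nra.
Qed.

Section RealCoordinates.

Variables (r1 r2 : R) (alpha beta : C).

Definition inv_sq_norm (x y : R) : R := / (x * x + y * y).

(* [Phi_x j] and [Phi_y j] are Re phi_j and -Im phi_j, the prescribed partial derivatives
   of X_j; [Phi_xx j] and [Phi_xy j] are Re phi_j' and -Im phi_j'. *)
Definition Phi_x (j : nat) (x y : R) : R :=
  match j with
  | 0%nat => (x * x - y * y) * (inv_sq_norm x y * inv_sq_norm x y)
             + r1 * x * inv_sq_norm x y + (Re alpha + Re beta) / 2
  | 1%nat => 2 * x * y * (inv_sq_norm x y * inv_sq_norm x y)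
             + r2 * x * inv_sq_norm x y + (Im alpha + Im beta) / 2
  | _ => x * inv_sq_norm x y
  end.

Definition Phi_y (j : nat) (x y : R) : R :=
  match j with
  | 0%nat => 2 * x * y * (inv_sq_norm x y * inv_sq_norm x y)
             + r1 * y * inv_sq_norm x y - (Im alpha - Im beta) / 2
  | 1%nat => - (x * x - y * y) * (inv_sq_norm x y * inv_sq_norm x y)
             + r2 * y * inv_sq_norm x y + (Re alpha - Re beta) / 2
  | _ => y * inv_sq_norm x y
  end.

Definition Phi_xx (j : nat) (x y : R) : R :=
  match j with
  | 0%nat => -2 * (x * x * x - 3 * x * y * y) * (inv_sq_norm x y * inv_sq_norm x y * inv_sq_norm x y)
             - r1 * (x * x - y * y) * (inv_sq_norm x y * inv_sq_norm x y)
  | 1%nat => -2 * (3 * x * x * y - y * y * y) * (inv_sq_norm x y * inv_sq_norm x y * inv_sq_norm x y)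
             - r2 * (x * x - y * y) * (inv_sq_norm x y * inv_sq_norm x y)
  | _ => - (x * x - y * y) * (inv_sq_norm x y * inv_sq_norm x y)
  end.

Definition Phi_xy (j : nat) (x y : R) : R :=
  match j with
  | 0%nat => -2 * (3 * x * x * y - y * y * y) * (inv_sq_norm x y * inv_sq_norm x y * inv_sq_norm x y)
             - r1 * (2 * x * y) * (inv_sq_norm x y * inv_sq_norm x y)
  | 1%nat => 2 * (x * x * x - 3 * x * y * y) * (inv_sq_norm x y * inv_sq_norm x y * inv_sq_norm x y)
             - r2 * (2 * x * y) * (inv_sq_norm x y * inv_sq_norm x y)
  | _ => - (2 * x * y) * (inv_sq_norm x y * inv_sq_norm x y)
  end.

Lemma Phi_re_im (j : nat) (x y : R) : (x, y) <> (0, 0) ->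
  Re (Phi r1 r2 alpha beta j (x, y)) = Phi_x j x y /\
  - Im (Phi r1 r2 alpha beta j (x, y)) = Phi_y j x y.
Proof.
  intros H. pose proof (punctured_sq_norm_pos x y H).
  assert ((x * x - y * y) ^ 2 + (x * y + y * x) ^ 2 <> 0) by nra.
  destruct j as [| [| j]]; unfold Phi, Phi_x, Phi_y, inv_sq_norm;
    destruct alpha as [a1 a2], beta as [b1 b2];
    unfold Re, Im, Cplus, Cminus, Copp, Cmult, Cinv, Cdiv, Cconj, RtoC, Ci; simpl;
    split; field; repeat split; nra.
Qed.

Ltac derive_rational :=
  unfold Phi_x, Phi_y, Phi_xx, Phi_xy, inv_sq_norm; auto_derive;
  [repeat split; lra | field; lra].

Lemma Phi_x_derive (j : nat) (x y : R) : (x, y) <> (0, 0) ->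
  is_derive (fun t => Phi_x j t y) x (Phi_xx j x y) /\
  is_derive (fun t => Phi_x j x t) y (Phi_xy j x y).
Proof.
  intros H. pose proof (punctured_sq_norm_pos x y H).
  destruct j as [| [| j]]; split; derive_rational.
Qed.

Lemma Phi_y_derive (j : nat) (x y : R) : (x, y) <> (0, 0) ->
  is_derive (fun t => Phi_y j t y) x (Phi_xy j x y) /\
  is_derive (fun t => Phi_y j x t) y (- Phi_xx j x y).
Proof.
  intros H. pose proof (punctured_sq_norm_pos x y H).
  destruct j as [| [| j]]; split; derive_rational.
Qed.

Lemma Phi_second_continuous (j : nat) (x y : R) : (x, y) <> (0, 0) ->
  continuous (fun z : R * R => Phi_xx j (fst z) (snd z)) (x, y) /\
  continuous (fun z : R * R => Phi_xy j (fst z) (snd z)) (x, y).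
Proof.
  intros H. pose proof (punctured_sq_norm_pos x y H).
  destruct j as [| [| j]]; unfold Phi_xx, Phi_xy, inv_sq_norm; split;
    repeat continuity_step; simpl; lra.
Qed.

Definition explicit_X (j : nat) (x y : R) : R :=
  match j with
  | 0%nat => - x * inv_sq_norm x y + r1 * (ln (x * x + y * y) / 2)
             + (Re alpha + Re beta) / 2 * x - (Im alpha - Im beta) / 2 * y
  | 1%nat => - y * inv_sq_norm x y + r2 * (ln (x * x + y * y) / 2)
             + (Im alpha + Im beta) / 2 * x + (Re alpha - Re beta) / 2 * y
  | _ => ln (x * x + y * y) / 2
  end.

Lemma explicit_X_is_Re_primitive : is_Re_primitive r1 r2 alpha beta explicit_X.
Proof.
  intros j Hj x y H. destruct (Phi_re_im j x y H) as [-> ->].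
  pose proof (punctured_sq_norm_pos x y H).
  destruct j as [| [| j]]; unfold explicit_X, Phi_x, Phi_y, inv_sq_norm; split;
    auto_derive; try (repeat split; lra); field; lra.
Qed.

End RealCoordinates.

Lemma Re_primitive_partials (r1 r2 : R) (alpha beta : C) (X : nat -> R -> R -> R) :
  is_Re_primitive r1 r2 alpha beta X ->
  forall j, (j < 3)%nat -> forall x y, (x, y) <> (0, 0) ->
  is_derive (fun t => X j t y) x (Phi_x r1 r2 alpha beta j x y) /\
  is_derive (fun t => X j x t) y (Phi_y r1 r2 alpha beta j x y).
Proof.
  intros HX j Hj x y H. destruct (Phi_re_im r1 r2 alpha beta j x y H) as [<- <-].
  exact (HX j Hj x y H).
Qed.

Lemma Re_primitive_harmonic (r1 r2 : R) (alpha beta : C) (X : nat -> R -> R -> R) :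
  is_Re_primitive r1 r2 alpha beta X ->
  forall j, (j < 3)%nat -> harmonic_on punctured_plane (X j).
Proof.
  intros HX j Hj.
  apply (harmonic_on_of_partials _ _ (Phi_x r1 r2 alpha beta j) (Phi_y r1 r2 alpha beta j)
           (Phi_xx r1 r2 j) (Phi_xy r1 r2 j) (Phi_xy r1 r2 j) (fun x y => - Phi_xx r1 r2 j x y)).
  - exact punctured_plane_open.
  - exact (Re_primitive_partials r1 r2 alpha beta X HX j Hj).
  - apply Phi_x_derive.
  - apply Phi_y_derive.
  - intros x y H. destruct (Phi_second_continuous r1 r2 j x y H) as [Cxx Cxy].
    repeat split; try assumption.
    exact (continuous_opp (fun z : R * R => Phi_xx r1 r2 j (fst z) (snd z)) (x, y) Cxx).
  - intros x y _. ring.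
Qed.

Lemma parallel_of_common_orthogonal (a b x y P Q : R) : (a, b) <> (0, 0) ->
  a * x + b * y = 0 -> a * P + b * Q = 0 -> - y * P + x * Q = 0.
Proof.
  intros Hab Hxy HPQ.
  destruct (Req_dec (b * x - a * y) 0) as [Hrot | Hrot].
  - assert (Ha : a * (x * x + y * y) = 0).
    { transitivity (x * (a * x + b * y) - y * (b * x - a * y)); [ring | rewrite Hxy, Hrot; ring]. }
    assert (Hb : b * (x * x + y * y) = 0).
    { transitivity (y * (a * x + b * y) + x * (b * x - a * y)); [ring | rewrite Hxy, Hrot; ring]. }
    assert (Hz : x * x + y * y = 0).
    { destruct (Req_dec a 0) as [-> | Ha0]; [destruct (Req_dec b 0) as [-> | Hb0] |].
      - exfalso. apply Hab. reflexivity.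
      - apply (Rmult_eq_reg_l b); [rewrite Hb; ring | exact Hb0].
      - apply (Rmult_eq_reg_l a); [rewrite Ha; ring | exact Ha0]. }
    assert (x = 0) by nra. assert (y = 0) by nra. subst. ring.
  - apply (Rmult_eq_reg_l (b * x - a * y)); [| exact Hrot].
    transitivity ((x * x + y * y) * (a * P + b * Q) - (a * x + b * y) * (x * P + y * Q)); [ring |].
    rewrite Hxy, HPQ. ring.
Qed.

Section Immersion.

Variables (r1 r2 : R) (alpha beta : C).

Definition Phi_kernel (x y a b : R) : Prop :=
  forall j, (j < 3)%nat ->
  a * Phi_x r1 r2 alpha beta j x y + b * Phi_y r1 r2 alpha beta j x y = 0.

Lemma immersion_on_iff_Phi_kernel (X : nat -> R -> R -> R) :
  is_Re_primitive r1 r2 alpha beta X ->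
  (immersion_on punctured_plane X <->
   forall x y, punctured_plane x y -> forall a b, Phi_kernel x y a b -> a = 0 /\ b = 0).
Proof.
  intros HX.
  assert (Hd : forall j x y, (j < 3)%nat -> (x, y) <> (0, 0) ->
            dx (X j) x y = Phi_x r1 r2 alpha beta j x y /\
            dy (X j) x y = Phi_y r1 r2 alpha beta j x y).
  { intros j x y Hj H. destruct (Re_primitive_partials r1 r2 alpha beta X HX j Hj x y H).
    split; apply is_derive_unique; assumption. }
  unfold immersion_on, Phi_kernel.
  split; intros Himm x y H a b Hk; apply (Himm x y H); intros j Hj.
  - destruct (Hd j x y Hj H) as [-> ->]. exact (Hk j Hj).
  - destruct (Hd j x y Hj H) as [<- <-]. exact (Hk j Hj).
Qed.

Lemma Phi_kernel_nontrivial_iff (x y : R) : (x, y) <> (0, 0) ->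
  (exists a b, (a, b) <> (0, 0) /\ Phi_kernel x y a b) <->
  ((alpha - RtoC (2 * inv_sq_norm x y)) * (x, y) = beta * Cconj (x, y))%C.
Proof.
  intros H. pose proof (punctured_sq_norm_pos x y H) as Hpos.
  unfold Phi_kernel. set (s := 2 * inv_sq_norm x y).
  destruct alpha as [a1 a2], beta as [b1 b2].
  assert (Rot0 : 2 * (y * Phi_x r1 r2 (a1, a2) (b1, b2) 0 x y - x * Phi_y r1 r2 (a1, a2) (b1, b2) 0 x y)
                 = (a2 - b2) * x + (a1 + b1 - s) * y)
    by (unfold s, Phi_x, Phi_y, inv_sq_norm; simpl; field; lra).
  assert (Rot1 : 2 * (- y * Phi_x r1 r2 (a1, a2) (b1, b2) 1 x y + x * Phi_y r1 r2 (a1, a2) (b1, b2) 1 x y)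
                 = (a1 - b1 - s) * x - (a2 + b2) * y)
    by (unfold s, Phi_x, Phi_y, inv_sq_norm; simpl; field; lra).
  assert (Equation : (((a1, a2) - RtoC s) * (x, y) = (b1, b2) * Cconj (x, y))%C <->
                     (a1 - b1 - s) * x - (a2 + b2) * y = 0 /\ (a2 - b2) * x + (a1 + b1 - s) * y = 0).
  { unfold Cminus, Cplus, Copp, Cmult, Cconj, RtoC; simpl. split.
    - intros E. injection E as E1 E2. split; lra.
    - intros [E1 E2]. f_equal; lra. }
  rewrite Equation. split.
  - intros [a [b [Hab Hk]]].
    assert (Hrad : a * x + b * y = 0).
    { pose proof (Hk 2%nat ltac:(lia)) as E. simpl in E. unfold inv_sq_norm in E.
      transitivity ((a * (x * / (x * x + y * y)) + b * (y * / (x * x + y * y))) * (x * x + y * y));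
        [field; lra | rewrite E; ring]. }
    pose proof (parallel_of_common_orthogonal _ _ _ _ _ _ Hab Hrad (Hk 0%nat ltac:(lia))).
    pose proof (parallel_of_common_orthogonal _ _ _ _ _ _ Hab Hrad (Hk 1%nat ltac:(lia))).
    split; lra.
  - intros [E1 E2]. exists (- y), x. split.
    + intros E. injection E as Ey Ex. apply H. f_equal; lra.
    + intros j Hj. destruct j as [| [| [| j]]]; [lra | lra | | lia].
      simpl. unfold inv_sq_norm. field. lra.
Qed.

End Immersion.

Lemma immersion_on_iff_no_positive_root (r1 r2 : R) (alpha beta : C) (X : nat -> R -> R -> R) :
  is_Re_primitive r1 r2 alpha beta X ->
  (immersion_on punctured_plane X <-> ~ exists s, 0 < s /\ Cmod (alpha - RtoC s) = Cmod beta).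
Proof.
  intros HX. rewrite (immersion_on_iff_Phi_kernel r1 r2 alpha beta X HX). split.
  - intros Himm [s [Hs Hmod]].
    apply conj_linear_kernel in Hmod as [z [Hz E]].
    assert (Hzpos : 0 < Cmod z) by (apply Cmod_gt_0; exact Hz).
    assert (Hz2 : 0 < Cmod z ^ 2) by nra.
    (* rescale the kernel vector z so that 2 / |z|^2 = s *)
    set (t := sqrt (2 / (s * Cmod z ^ 2))).
    assert (Ht : t * t = 2 / (s * Cmod z ^ 2))
      by (apply sqrt_sqrt, Rlt_le, Rdiv_lt_0_compat; nra).
    pose proof (conj_linear_scale _ _ z t E) as Et.
    pose proof (Cmod2_alt (RtoC t * z)%C) as Hnorm.
    rewrite Cmod_mult, Cmod_R, Rpow_mult_distr, pow2_abs in Hnorm.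
    destruct (RtoC t * z)%C as [x y]. unfold Re, Im in Hnorm; cbn [fst snd] in Hnorm.
    assert (Hxy2 : x * x + y * y = 2 / s).
    { transitivity (t ^ 2 * Cmod z ^ 2); [rewrite Hnorm; ring |].
      replace (t ^ 2) with (t * t) by ring. rewrite Ht. field. split; lra. }
    assert (Hxy : (x, y) <> (0, 0)).
    { intros Exy. injection Exy as -> ->. assert (0 < 2 / s) by (apply Rdiv_lt_0_compat; lra). lra. }
    assert (Hs' : 2 * inv_sq_norm x y = s) by (unfold inv_sq_norm; rewrite Hxy2; field; lra).
    destruct (proj2 (Phi_kernel_nontrivial_iff r1 r2 alpha beta x y Hxy)) as [a [b [Hab Hk]]].
    { rewrite Hs'. exact Et. }
    apply Hab. destruct (Himm x y Hxy a b Hk) as [-> ->]. reflexivity.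
  - intros Hno x y Hxy a b Hk.
    assert (Hnontrivial : (a, b) <> (0, 0) -> False).
    { intros Hab. apply Hno. exists (2 * inv_sq_norm x y). split.
      - pose proof (punctured_sq_norm_pos x y Hxy). unfold inv_sq_norm.
        apply Rmult_lt_0_compat; [lra | apply Rinv_0_lt_compat; lra].
      - apply conj_linear_kernel. exists (x, y). split; [exact Hxy |].
        apply (Phi_kernel_nontrivial_iff r1 r2 alpha beta x y Hxy). exists a, b. split; assumption. }
    destruct (Req_dec a 0) as [Ha | Ha]; destruct (Req_dec b 0) as [Hb | Hb];
      [split; assumption | exfalso; apply Hnontrivial; intros E; injection E; lra ..].
Qed.

Theorem lemma5p3 (alpha beta : C) (r1 r2 : R) :
  Cmod alpha <> Cmod beta ->
  (exists X : nat -> R -> R -> R, is_Re_primitive r1 r2 alpha beta X) /\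
  (forall X : nat -> R -> R -> R, is_Re_primitive r1 r2 alpha beta X ->
     (forall j : nat, (j < 3)%nat -> harmonic_on punctured_plane (X j)) /\
     (immersion_on punctured_plane X <-> Omega alpha beta)).
Proof.
  intros Hne. split.
  - exists (explicit_X r1 r2 alpha beta). apply explicit_X_is_Re_primitive.
  - intros X HX. split.
    + exact (Re_primitive_harmonic r1 r2 alpha beta X HX).
    + rewrite (immersion_on_iff_no_positive_root r1 r2 alpha beta X HX).
      symmetry. exact (Omega_iff_no_positive_root alpha beta Hne).
Qed.
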